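(* Let $\Gamma$ be a group that is nilpotent of class $\le n$, let $G:=\mathrm{Cay}(\Gamma,S)$ be a Cayley graph for a generating set $S$ containing two inequivalent elements, and let $r\ge 2^{n+1}$. Suppose that for all $g,h\in S$ with $g\not\equiv h$ there exists a morpheme of $\Gamma$ in $S$ of length at most $r$ that is magic in $g$ and $h$. Then $G$ has no $r$-local cutvertex.
   Context: A generating set excludes the neutral element $\mathbb{I}$ and is closed under inverses; $\mathrm{Cay}(\Gamma,S)$ is the simple graph on $\Gamma$ with edges $\{g,gs\}$. $a\equiv b$ means $a=b$ or $a=b^{-1}$. $\Gamma$ is nilpotent of class $\le n$ if $[g,h]_n=\mathbb{I}$ for all $g\not\equiv h$, where $[g,h]_1=gh^{-1}g^{-1}h$ and $[g,h]_n$ is the reduced form of $g[g,h]_{n-1}^{-1}g^{-1}[g,h]_{n-1}$. A morpheme of $\Gamma$ in $S$ is a nonempty word in $S$ evaluating to $\mathbb{I}$ none of whose nonempty proper contiguous subwords evaluates to $\mathbb{I}$. A word $u$ is magic in $g,h$ if $u$ and $u^{-1}$ together contain at least three of $gh,hg,g^{-1}h,hg^{-1}$ as contiguous subwords. The ball $B_r(v)$ is the subgraph of all vertices and edges on closed walks of length $\le r$ through $v$; $v$ is an $r$-local cutvertex if $B_r(v)-v$ is disconnected. *)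

From Stdlib Require Import List Arith Relations.
Import ListNotations.
Set Implicit Arguments.

Record Group := {
  carrier :> Type;
  gmul : carrier -> carrier -> carrier;
  ginv : carrier -> carrier;
  gone : carrier;
  gmulA : forall x y z, gmul x (gmul y z) = gmul (gmul x y) z;
  gmul1 : forall x, gmul gone x = x;
  gmulV : forall x, gmul (ginv x) x = gone
}.

Section Defs.
Variable Γ : Group.
Local Notation "x * y" := (gmul Γ x y).
Local Notation "x ^-1" := (ginv Γ x) (at level 3).
Local Notation "'I'" := (gone Γ).

Definition gequiv (a b : Γ) : Prop := a = b \/ a = b^-1.

(** [g,h]_1 = g h^-1 g^-1 h ; [g,h]_k = g [g,h]_{k-1}^-1 g^-1 [g,h]_{k-1}.
    With [g,h]_0 := h, both are the step x |-> g x^-1 g^-1 x. *)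
Fixpoint itcomm (k : nat) (g h : Γ) : Γ :=
  match k with
  | O => h
  | S k' => let c := itcomm k' g h in g * (c^-1 * (g^-1 * c))
  end.

(** nilpotent of class <= n (paper's definition, n >= 1) *)
Definition nilpotent_le (n : nat) : Prop :=
  forall g h : Γ, ~ gequiv g h -> itcomm n g h = I.

Definition weval (w : list Γ) : Γ := fold_right (fun a b => a * b) I w.

Definition generating_set (S : Γ -> Prop) : Prop :=
  ~ S I /\ (forall s, S s -> S s^-1) /\
  (forall g : Γ, exists w, Forall S w /\ weval w = g).

Definition subword (u w : list Γ) : Prop := exists a b, w = a ++ u ++ b.

Definition winv (w : list Γ) : list Γ := rev (map (ginv Γ) w).

Definition morpheme (S : Γ -> Prop) (w : list Γ) : Prop :=
  w <> [] /\ Forall S w /\ weval w = I /\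
  (forall a u b, w = a ++ u ++ b -> u <> [] -> (a <> [] \/ b <> []) ->
     weval u <> I).

Definition magic_word (g h : Γ) (i : nat) : list Γ :=
  match i with
  | 0 => [g; h]
  | 1 => [h; g]
  | 2 => [g^-1; h]
  | _ => [h; g^-1]
  end.

Definition magic (g h : Γ) (u : list Γ) : Prop :=
  exists i j k, i < j /\ j < k /\ k < 4 /\
    forall m, m = i \/ m = j \/ m = k ->
      subword (magic_word g h m) u \/ subword (magic_word g h m) (winv u).

Definition cay_adj (S : Γ -> Prop) (x y : Γ) : Prop := exists s, S s /\ y = x * s.
End Defs.

Section Graph.
Variable T : Type.
Variable E : T -> T -> Prop.

Fixpoint is_walk (x : T) (l : list T) : Prop :=
  match l with
  | [] => True
  | y :: l' => E x y /\ is_walk y l'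
  end.

Fixpoint walk_edge (x : T) (l : list T) (a b : T) : Prop :=
  match l with
  | [] => False
  | y :: l' => ((a = x /\ b = y) \/ (a = y /\ b = x)) \/ walk_edge y l' a b
  end.

Definition short_closed_walk (r : nat) (v x0 : T) (l : list T) : Prop :=
  is_walk x0 l /\ last l x0 = x0 /\ length l <= r /\ In v (x0 :: l).

Definition ballV (r : nat) (v x : T) : Prop :=
  exists x0 l, short_closed_walk r v x0 l /\ In x (x0 :: l).

Definition ballE (r : nat) (v a b : T) : Prop :=
  exists x0 l, short_closed_walk r v x0 l /\ walk_edge x0 l a b.

Definition ball_minus_E (r : nat) (v a b : T) : Prop :=
  ballE r v a b /\ a <> v /\ b <> v.

Definition local_cutvertex (r : nat) (v : T) : Prop :=
  exists x y, ballV r v x /\ x <> v /\ ballV r v y /\ y <> v /\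
    ~ clos_refl_trans T (ball_minus_E r v) x y.
End Graph.

From Stdlib Require Import List Arith Relations Lia Classical.
Import ListNotations.

(* Every vertex x <> v of B_r(v) lies on a closed walk of length <= r through
   v; walking along it from x to the nearest occurrence of v joins x, inside
   B_r(v) - v, to a neighbour v s of v.  A morpheme of length <= r containing
   the subword x y, read from v cyclically starting with y, is a closed walk
   through v that returns to v only at its end; hence v y and v x^-1 are
   joined in B_r(v) - v.  A morpheme magic in g, h yields three of the four
   joins  v h ~ v g^-1,  v g ~ v h^-1,  v h ~ v g,  v g^-1 ~ v h^-1, which
   form a 4-cycle, so v g^(+-1) and v h^(+-1) are all joined.  Since S has two
   inequivalent elements, every s in S is inequivalent to one of them, and all
   neighbours of v are joined. *)

Section GroupFacts.
Variable G : Group.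
Local Notation "x * y" := (gmul G x y).
Local Notation "x ^-1" := (ginv G x) (at level 3).
Local Notation "'I'" := (gone G).

Lemma mulgV (x : G) : x * x^-1 = I.
Proof.
  rewrite <- (gmul1 G (x * x^-1)), <- (gmulV G x^-1) at 1.
  rewrite <- gmulA, (gmulA G x^-1 x x^-1), gmulV, gmul1.
  apply gmulV.
Qed.

Lemma mulg1 (x : G) : x * I = x.
Proof. rewrite <- (gmulV G x), gmulA, mulgV. apply gmul1. Qed.

Lemma mulgI (z x y : G) : z * x = z * y -> x = y.
Proof.
  intro E.
  rewrite <- (gmul1 G x), <- (gmul1 G y), <- (gmulV G z), <- !gmulA, E.
  reflexivity.
Qed.

Lemma mulg_eq1_inv (x y : G) : x * y = I -> y = x^-1.
Proof.
  intro E. rewrite <- (gmul1 G y), <- (gmulV G x), <- gmulA, E. apply mulg1.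
Qed.

Lemma invgK (x : G) : x^-1^-1 = x.
Proof. symmetry. apply mulg_eq1_inv, gmulV. Qed.

Lemma mulg_eq1_comm (x y : G) : x * y = I -> y * x = I.
Proof. intro E. apply mulg_eq1_inv in E. subst. apply gmulV. Qed.

Lemma invMg (x y : G) : (x * y)^-1 = y^-1 * x^-1.
Proof.
  symmetry. apply mulg_eq1_inv.
  rewrite <- gmulA, (gmulA G y), mulgV, gmul1. apply mulgV.
Qed.

Lemma invg1 : I^-1 = I.
Proof. symmetry. apply mulg_eq1_inv, gmul1. Qed.

Lemma gequiv_sym (a b : G) : gequiv G a b -> gequiv G b a.
Proof. intros [->| ->]; [left | right; rewrite invgK]; reflexivity. Qed.

Lemma gequiv_trans (a b c : G) : gequiv G a b -> gequiv G b c -> gequiv G a c.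
Proof.
  intros [->| ->] [->| ->]; unfold gequiv; rewrite ?invgK; auto.
Qed.

Lemma weval_cat (p q : list G) : weval G (p ++ q) = weval G p * weval G q.
Proof.
  induction p as [|s p IH]; simpl.
  - rewrite gmul1. reflexivity.
  - rewrite IH, gmulA. reflexivity.
Qed.

Lemma winv_cat (p q : list G) : winv G (p ++ q) = winv G q ++ winv G p.
Proof. unfold winv. rewrite map_app, rev_app_distr. reflexivity. Qed.

Lemma winvK (p : list G) : winv G (winv G p) = p.
Proof.
  unfold winv. rewrite map_rev, rev_involutive, map_map.
  induction p as [|s p IH]; simpl; rewrite ?invgK, ?IH; reflexivity.
Qed.

Lemma weval_winv (p : list G) : weval G (winv G p) = (weval G p)^-1.
Proof.
  induction p as [|s p IH]; simpl.
  - rewrite invg1. reflexivity.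
  - change (s :: p) with ([s] ++ p).
    rewrite winv_cat, weval_cat, IH, invMg. simpl. rewrite mulg1. reflexivity.
Qed.

Lemma winv_eq_nil (p : list G) : winv G p = [] -> p = [].
Proof.
  unfold winv. intro E. apply (f_equal (@length G)) in E.
  rewrite length_rev, length_map in E. destruct p; [reflexivity | discriminate].
Qed.

Lemma length_winv (p : list G) : length (winv G p) = length p.
Proof. unfold winv. rewrite length_rev, length_map. reflexivity. Qed.

End GroupFacts.

Section Morphemes.
Variables (G : Group) (S : G -> Prop).
Local Notation "x * y" := (gmul G x y).
Local Notation "x ^-1" := (ginv G x) (at level 3).
Local Notation "'I'" := (gone G).

Lemma morpheme_winv (w : list G) :
  (forall s, S s -> S s^-1) -> morpheme G S w -> morpheme G S (winv G w).
Proof.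
  intros S_inv [Hne [HS [Hw Hmin]]]. split; [|split; [|split]].
  - intro E. apply Hne, winv_eq_nil, E.
  - unfold winv. apply Forall_rev, Forall_map.
    eapply Forall_impl; [exact S_inv | exact HS].
  - rewrite weval_winv, Hw. apply invg1.
  - intros a u b E Hu Hab Hev. apply (Hmin (winv G b) (winv G u) (winv G a)).
    + rewrite <- (winvK G w), E, !winv_cat, app_assoc. reflexivity.
    + intro C. apply Hu, winv_eq_nil, C.
    + destruct Hab as [Ha | Hb]; [right | left]; intro C;
        apply winv_eq_nil in C; contradiction.
    + rewrite weval_winv, Hev. apply invg1.
Qed.

Lemma morpheme_rot1 (x : G) (w : list G) :
  morpheme G S (x :: w) -> morpheme G S (w ++ [x]).
Proof.
  intros [_ [HS [Hw Hmin]]]. inversion HS as [|? ? Sx Sw]; subst.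
  assert (Hw' : weval G w * x = I).
  { apply mulg_eq1_comm. exact Hw. }
  split; [|split; [|split]].
  - destruct w; discriminate.
  - apply Forall_app. auto.
  - rewrite weval_cat. simpl. rewrite mulg1. exact Hw'.
  - intros a u b E Hu Hab Hev. destruct b as [|z b].
    + (* u = u' ++ [x] is a proper suffix; then the prefix a of w is trivial *)
      destruct (exists_last Hu) as [u' [y ->]].
      rewrite app_nil_r, app_assoc in E. apply app_inj_tail in E.
      destruct E as [-> <-].
      destruct Hab as [Ha | []]; [|reflexivity].
      apply (Hmin [x] a u'); [reflexivity | exact Ha | left; discriminate |].
      rewrite weval_cat in Hev. simpl in Hev. rewrite mulg1 in Hev.
      simpl in Hw. apply mulg_eq1_comm in Hw.
      rewrite weval_cat, <- gmulA, Hev, mulg1 in Hw. exact Hw.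
    + destruct (exists_last (l := z :: b) ltac:(discriminate)) as [b' [y E']].
      rewrite E', !app_assoc in E. apply app_inj_tail in E. destruct E as [E _].
      rewrite <- app_assoc in E.
      apply (Hmin (x :: a) u b'); [rewrite E; reflexivity | exact Hu |
        left; discriminate | exact Hev].
Qed.

Lemma morpheme_rot (a c : list G) :
  morpheme G S (a ++ c) -> morpheme G S (c ++ a).
Proof.
  revert c. induction a as [|x a IH]; intros c Hm.
  - rewrite app_nil_r. exact Hm.
  - apply morpheme_rot1 in Hm. rewrite <- app_assoc in Hm.
    apply IH in Hm. rewrite <- app_assoc in Hm. exact Hm.
Qed.

Lemma morpheme_prefix_neq1 (p q : list G) :
  morpheme G S (p ++ q) -> p <> [] -> q <> [] -> weval G p <> I.
Proof.
  intros [_ [_ [_ Hmin]]] Hp Hq. apply (Hmin [] p q); auto.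
Qed.

End Morphemes.

Section Walks.
Variables (T : Type) (E : T -> T -> Prop).

Lemma clos_rt_sym (R : T -> T -> Prop) :
  (forall a b, R a b -> R b a) ->
  forall x y, clos_refl_trans T R x y -> clos_refl_trans T R y x.
Proof.
  intros R_sym x y H. induction H.
  - apply rt_step, R_sym. assumption.
  - apply rt_refl.
  - eapply rt_trans; eassumption.
Qed.

Lemma last_cons (x d : T) (l : list T) : last (x :: l) d = last l x.
Proof.
  revert x d. induction l as [|y l IH]; intros x d; [reflexivity|].
  change (last (y :: l) d = last (y :: l) x). rewrite !IH. reflexivity.
Qed.

Lemma In_last (x : T) (l : list T) : In (last l x) (x :: l).
Proof.
  destruct l as [|y l]; [left; reflexivity|].
  destruct (exists_last (l := y :: l) ltac:(discriminate)) as [l' [z ->]].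
  rewrite last_last. right. apply in_or_app. right. left. reflexivity.
Qed.

Lemma walk_edge_app_l (x a b : T) (l1 l2 : list T) :
  walk_edge x l1 a b -> walk_edge x (l1 ++ l2) a b.
Proof.
  revert x. induction l1 as [|y l1 IH]; intros x H; simpl in *; [contradiction|].
  destruct H; auto.
Qed.

Lemma walk_edge_sym (x a b : T) (l : list T) :
  walk_edge x l a b -> walk_edge x l b a.
Proof.
  revert x. induction l as [|y l IH]; intros x H; simpl in *; [contradiction|].
  destruct H as [[[-> ->] | [-> ->]] | H]; auto.
Qed.

Lemma ball_minus_E_sym (r : nat) (v a b : T) :
  ball_minus_E E r v a b -> ball_minus_E E r v b a.
Proof.
  intros [[x0 [l [Hw He]]] [Ha Hb]]. split; [|auto].
  exists x0, l. split; [exact Hw | apply walk_edge_sym, He].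
Qed.

Section Avoiding.
Variables (R : T -> T -> Prop) (v : T).

Lemma avoiding_walk_connected (x0 : T) (l : list T) :
  (forall a b, walk_edge x0 l a b -> a <> v -> b <> v -> R a b) ->
  ~ In v (x0 :: l) -> forall x, In x (x0 :: l) -> clos_refl_trans T R x0 x.
Proof.
  revert x0. induction l as [|y l IH]; intros x0 HR Hv x Hx.
  - destruct Hx as [<- | []]. apply rt_refl.
  - destruct Hx as [<- | Hx]; [apply rt_refl|].
    apply rt_trans with y.
    + apply rt_step, HR; [simpl; auto | |]; intro C; apply Hv; subst; simpl; auto.
    + apply IH; [intros; apply HR; simpl; auto | |exact Hx].
      intro C; apply Hv; right; exact C.
Qed.

Hypothesis R_sym : forall a b, R a b -> R b a.

Lemma walk_connected_to_neighbour (x0 : T) (l : list T) :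
  is_walk E x0 l ->
  (forall a b, walk_edge x0 l a b -> a <> v -> b <> v -> R a b) ->
  In v (x0 :: l) -> forall x, In x (x0 :: l) -> x <> v ->
  exists y, (E v y \/ E y v) /\ clos_refl_trans T R x y.
Proof.
  revert x0. induction l as [|y l IH]; intros x0 Hw HR Hv x Hx Hxv.
  { destruct Hv as [Hv | []], Hx as [Hx | []]. congruence. }
  destruct Hw as [Hx0y Hw].
  assert (HR' : forall a b, walk_edge y l a b -> a <> v -> b <> v -> R a b)
    by (intros; apply HR; simpl; auto).
  destruct Hx as [-> | Hx].
  - destruct (classic (y = v)) as [-> | Hyv].
    + exists x. split; [right; exact Hx0y | apply rt_refl].
    + destruct Hv as [-> | Hv]; [contradiction|].
      destruct (IH y Hw HR' Hv y (or_introl eq_refl) Hyv) as [z [Hz Hyz]].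
      exists z. split; [exact Hz|].
      apply rt_trans with y; [apply rt_step, HR; simpl; auto | exact Hyz].
  - destruct (classic (In v (y :: l))) as [Hv' | Hv'].
    + exact (IH y Hw HR' Hv' x Hx Hxv).
    + destruct Hv as [Hx0v | Hv]; [rewrite Hx0v in Hx0y | contradiction].
      exists y. split; [left; exact Hx0y|].
      apply clos_rt_sym; [exact R_sym|].
      exact (avoiding_walk_connected y l HR' Hv' x Hx).
Qed.

End Avoiding.

Lemma walk_edge_ball_minus (r : nat) (v x0 a b : T) (l : list T) :
  short_closed_walk E r v x0 l -> walk_edge x0 l a b -> a <> v -> b <> v ->
  ball_minus_E E r v a b.
Proof. intros Hw He Ha Hb. split; [exists x0, l; auto | auto]. Qed.

Lemma ballV_connected_to_neighbour (r : nat) (v x : T) :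
  ballV E r v x -> x <> v ->
  exists y, (E v y \/ E y v) /\ clos_refl_trans T (ball_minus_E E r v) x y.
Proof.
  intros [x0 [l [Hw Hx]]] Hxv. pose proof Hw as [Hwalk [_ [_ Hv]]].
  apply (walk_connected_to_neighbour (ball_minus_E E r v) v) with x0 l; auto.
  - intros a b; apply ball_minus_E_sym.
  - intros a b. exact (walk_edge_ball_minus r v x0 a b l Hw).
Qed.

Lemma closed_walk_segment_connected (r : nat) (v z : T) (l l' : list T) :
  short_closed_walk E r v v (z :: l ++ l') -> ~ In v (z :: l) ->
  clos_refl_trans T (ball_minus_E E r v) z (last l z).
Proof.
  intros Hw Hv. apply (avoiding_walk_connected _ v z l); [|exact Hv | apply In_last].
  intros a b He. apply (walk_edge_ball_minus r v v a b (z :: l ++ l') Hw).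
  right. apply walk_edge_app_l, He.
Qed.

End Walks.

Section Cayley.
Variables (G : Group) (S : G -> Prop) (r : nat).
Hypothesis S_inv : forall s, S s -> S (ginv G s).
Local Notation "x * y" := (gmul G x y).
Local Notation "x ^-1" := (ginv G x) (at level 3).
Local Notation "'I'" := (gone G).
Local Notation conn v := (clos_refl_trans G (ball_minus_E (cay_adj G S) r v)).

Fixpoint cay_walk (z : G) (w : list G) : list G :=
  match w with
  | [] => []
  | s :: w' => z * s :: cay_walk (z * s) w'
  end.

Lemma is_walk_cay_walk (z : G) (w : list G) :
  Forall S w -> is_walk (cay_adj G S) z (cay_walk z w).
Proof.
  revert z. induction w as [|s w IH]; intros z Hw; simpl; [trivial|].
  inversion Hw; subst. split; [exists s; auto | apply IH; assumption].
Qed.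

Lemma last_cay_walk (z : G) (w : list G) : last (cay_walk z w) z = z * weval G w.
Proof.
  revert z. induction w as [|s w IH]; intro z.
  - simpl. rewrite mulg1. reflexivity.
  - change (last (z * s :: cay_walk (z * s) w) z = z * (s * weval G w)).
    rewrite last_cons, IH, gmulA. reflexivity.
Qed.

Lemma length_cay_walk (z : G) (w : list G) : length (cay_walk z w) = length w.
Proof. revert z. induction w; intro z; simpl; auto. Qed.

Lemma cay_walk_cat (z : G) (p q : list G) :
  cay_walk z (p ++ q) = cay_walk z p ++ cay_walk (z * weval G p) q.
Proof.
  revert z. induction p as [|s p IH]; intro z; simpl.
  - rewrite mulg1. reflexivity.
  - rewrite IH, gmulA. reflexivity.
Qed.

Lemma in_cay_walk (z q : G) (w : list G) : In q (cay_walk z w) ->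
  exists p1 p2, w = p1 ++ p2 /\ p1 <> [] /\ q = z * weval G p1.
Proof.
  revert z. induction w as [|s w IH]; intros z Hq; simpl in Hq; [contradiction|].
  destruct Hq as [<- | Hq].
  - exists [s], w. simpl. rewrite mulg1. split; [reflexivity | split; [discriminate | reflexivity]].
  - destruct (IH _ Hq) as [p1 [p2 [-> [_ ->]]]].
    exists (s :: p1), p2. simpl. rewrite gmulA.
    split; [reflexivity | split; [discriminate | reflexivity]].
Qed.

Lemma cay_walk_prefix_avoids (z : G) (p q : list G) :
  morpheme G S (p ++ q) -> q <> [] -> ~ In z (cay_walk z p).
Proof.
  intros Hm Hq Hz. destruct (in_cay_walk z z p Hz) as [p1 [p2 [-> [Hp1 Hev]]]].
  rewrite <- app_assoc in Hm. apply (morpheme_prefix_neq1 G S p1 (p2 ++ q) Hm Hp1).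
  - intro C. apply app_eq_nil in C. destruct C as [_ C]. contradiction.
  - apply (mulgI G z). rewrite mulg1. symmetry. exact Hev.
Qed.

Lemma morpheme_subword_connected (v x y : G) (w : list G) :
  morpheme G S w -> length w <= r -> subword G [x; y] w -> conn v (v * y) (v * x^-1).
Proof.
  intros Hm Hlen [a [b ->]].
  set (p := y :: b ++ a).
  assert (Hrot : morpheme G S (p ++ [x])).
  { replace (p ++ [x]) with ((y :: b) ++ a ++ [x])
      by (unfold p; simpl; rewrite app_assoc; reflexivity).
    apply morpheme_rot. rewrite <- app_assoc. exact Hm. }
  pose proof Hrot as [_ [HS [Hev _]]].
  assert (Hp : weval G p = x^-1).
  { rewrite weval_cat in Hev. simpl in Hev. rewrite mulg1 in Hev.
    apply mulg_eq1_inv, mulg_eq1_comm, Hev. }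
  assert (Hwalk : short_closed_walk (cay_adj G S) r v v (cay_walk v (p ++ [x]))).
  { split; [|split; [|split]].
    - apply is_walk_cay_walk, HS.
    - rewrite last_cay_walk, Hev. apply mulg1.
    - rewrite length_cay_walk. unfold p. rewrite !length_app in *. simpl in *.
      rewrite length_app. lia.
    - left. reflexivity. }
  rewrite cay_walk_cat in Hwalk.
  replace (v * x^-1) with (last (cay_walk (v * y) (b ++ a)) (v * y)).
  - apply (closed_walk_segment_connected _ _ r v (v * y) _ _ Hwalk).
    apply (cay_walk_prefix_avoids v p [x] Hrot). discriminate.
  - rewrite last_cay_walk, <- Hp, <- gmulA. reflexivity.
Qed.

Lemma subword_connected (v x y : G) (w : list G) :
  morpheme G S w -> length w <= r ->
  subword G [x; y] w \/ subword G [x; y] (winv G w) -> conn v (v * y) (v * x^-1).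
Proof.
  intros Hm Hlen [Hw | Hw].
  - exact (morpheme_subword_connected v x y w Hm Hlen Hw).
  - apply (morpheme_subword_connected v x y (winv G w)); [| | exact Hw].
    + apply morpheme_winv; assumption.
    + rewrite length_winv. exact Hlen.
Qed.

Lemma conn_sym (v a b : G) : conn v a b -> conn v b a.
Proof. apply clos_rt_sym. intros a' b'. apply ball_minus_E_sym. Qed.

(* The four magic words join, in B_r(v) - v, the four edges of the 4-cycle
   v h, v g^-1, v h^-1, v g; any three of them connect it. *)
Lemma magic_connected (v g h : G) (w : list G) :
  morpheme G S w -> length w <= r -> magic G g h w ->
  conn v (v * g) (v * h) /\ conn v (v * g) (v * g^-1).
Proof.
  intros Hm Hlen [i [j [k [Hij [Hjk [Hk Hmag]]]]]].
  assert (Hjoin : forall m, m = i \/ m = j \/ m = k ->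
    conn v (v * nth 1 (magic_word G g h m) I) (v * (nth 0 (magic_word G g h m) I)^-1)).
  { intros m Hm'. apply (subword_connected v _ _ w Hm Hlen).
    destruct m as [|[|[|m]]]; exact (Hmag _ Hm'). }
  pose proof (Hjoin i (or_introl eq_refl)) as Ei.
  pose proof (Hjoin j (or_intror (or_introl eq_refl))) as Ej.
  pose proof (Hjoin k (or_intror (or_intror eq_refl))) as Ek.
  assert (Hcases : (i, j, k) = (0, 1, 2) \/ (i, j, k) = (0, 1, 3) \/
                   (i, j, k) = (0, 2, 3) \/ (i, j, k) = (1, 2, 3)).
  { destruct i as [|[|i]], j as [|[|[|j]]], k as [|[|[|[|k]]]];
      auto; exfalso; lia. }
  destruct Hcases as [E | [E | [E | E]]]; injection E as -> -> ->;
    cbn [nth magic_word] in Ei, Ej, Ek; rewrite ?invgK in *;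
    split; eauto 6 using rt_trans, conn_sym.
Qed.

Lemma neighbours_connected (v s t : G) :
  (exists g h, S g /\ S h /\ ~ gequiv G g h) ->
  (forall g h, S g -> S h -> ~ gequiv G g h ->
     exists w, morpheme G S w /\ length w <= r /\ magic G g h w) ->
  S s -> S t -> conn v (v * s) (v * t).
Proof.
  intros [g [h [Sg [Sh Hgh]]]] Hmagic Ss St.
  assert (Hinv : forall s, S s -> conn v (v * s) (v * s^-1)).
  { intros s' Ss'. destruct (classic (gequiv G s' g)) as [Eg | Eg].
    - assert (Eh : ~ gequiv G s' h)
        by (intro Eh; apply Hgh, (gequiv_trans G g s' h); [apply gequiv_sym|]; assumption).
      destruct (Hmagic s' h Ss' Sh Eh) as [w [Hm [Hlen Hw]]].
      apply (magic_connected v s' h w Hm Hlen Hw).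
    - destruct (Hmagic s' g Ss' Sg Eg) as [w [Hm [Hlen Hw]]].
      apply (magic_connected v s' g w Hm Hlen Hw). }
  destruct (classic (gequiv G s t)) as [[-> | ->] | Est].
  - apply rt_refl.
  - apply conn_sym, Hinv, St.
  - destruct (Hmagic s t Ss St Est) as [w [Hm [Hlen Hw]]].
    apply (magic_connected v s t w Hm Hlen Hw).
Qed.

Lemma ballV_connected_to_generator (v x : G) :
  ballV (cay_adj G S) r v x -> x <> v -> exists s, S s /\ conn v x (v * s).
Proof.
  intros Hx Hxv.
  destruct (ballV_connected_to_neighbour _ _ r v x Hx Hxv)
    as [y [[[s [Ss ->]] | [s [Ss Ev]]] Hxy]].
  - exists s. auto.
  - exists s^-1. split; [apply S_inv, Ss|].
    replace (v * s^-1) with y; [exact Hxy|].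
    rewrite Ev, <- gmulA, mulgV, mulg1. reflexivity.
Qed.

End Cayley.

Theorem lemma4p2 (Γ : Group) (S : Γ -> Prop) (n r : nat) :
  1 <= n ->
  nilpotent_le Γ n ->
  generating_set Γ S ->
  (exists g h, S g /\ S h /\ ~ gequiv Γ g h) ->
  2 ^ (n + 1) <= r ->
  (forall g h, S g -> S h -> ~ gequiv Γ g h ->
     exists w, morpheme Γ S w /\ length w <= r /\ magic Γ g h w) ->
  forall v : Γ, ~ local_cutvertex (cay_adj Γ S) r v.
Proof.
  intros _ _ [_ [S_inv _]] Hpair _ Hmagic v [x [y [Hx [Hxv [Hy [Hyv Hxy]]]]]].
  destruct (ballV_connected_to_generator Γ S r S_inv v x Hx Hxv) as [s [Ss Hxs]].
  destruct (ballV_connected_to_generator Γ S r S_inv v y Hy Hyv) as [t [St Hyt]].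
  apply Hxy, rt_trans with (gmul Γ v s); [exact Hxs|].
  apply rt_trans with (gmul Γ v t); [|apply conn_sym, Hyt].
  exact (neighbours_connected Γ S r S_inv v s t Hpair Hmagic Ss St).
Qed.
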